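(* Fix reals $\mu>\nu>0$, reals $Q_\mu,Q_\nu,E_\mu,E_\nu$, and $Y_0\in[0,1]$. Let $S$ be the set of all configurations $(Y_i,e_i)_{i\ge 1}$ with $Y_i,e_i\in[0,1]$ for all $i\ge1$ which, together with the given $Y_0$ and $e_0=1/2$, satisfy the decoy-state constraints (DS). Define $$K=\frac{1}{\mu}e^{\mu}E_\mu Q_\mu-\frac{1}{\nu}e^{\nu}E_\nu Q_\nu+\frac{\mu-\nu}{2\mu\nu}Y_0,\qquad \beta_i=\frac{\mu^{i-1}-\nu^{i-1}}{i!}\ (i\ge3),$$ assume $0\le K<\sum_{i\ge 3}\beta_i$, and let $k_0$ be the smallest integer $\ge 3$ with $\sum_{i=k_0}^\infty\beta_i\le K$; assume $k_0\ge 4$. Define a configuration $(Y_i^\circ,e_i^\circ)_{i\ge1}$ by: $e_i^\circ=1$ for all $i\ge3$; $Y_i^\circ=0$ for $3\le i\le k_0-2$; $Y_{k_0-1}^\circ=\frac{(k_0-1)!}{\mu^{k_0-2}-\nu^{k_0-2}}\Big(K-\sum_{i=k_0}^\infty\beta_i\Big)$; $Y_i^\circ=1$ for $i\ge k_0$; $Y_1^\circ,Y_2^\circ$ are the unique solution of the two gain equations of (DS) (with the given $Y_0$ and these $Y_i^\circ$, $i\ge3$); $e_1^\circ Y_1^\circ$ is determined by the two error equations of (DS) (which then force $e_2^\circ Y_2^\circ=0$), and $e_2^\circ=0$. Assume $Y_1^\circ>0$, that this configuration lies in $S$, and that $0<e_1^\circ\le 1/2$. Then for every $(Y_i,e_i)_{i\ge1}\in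 S$, $$Y_1\big[1-h(e_1)\big]\ \ge\ Y_1^\circ\big[1-h(e_1^\circ)\big],$$ i.e. $(Y_i^\circ,e_i^\circ)$ minimizes $Y_1[1-h(e_1)]$ over $S$.
   Context: $h(x)=-x\log_2 x-(1-x)\log_2(1-x)$ is the binary entropy function on $[0,1]$ (with $0\log_2 0=0$). For reals $\mu>\nu>0$, the decoy-state constraints (DS) on sequences $(Y_i)_{i\ge0},(e_i)_{i\ge0}$ with values in $[0,1]$ are $$Q_\mu=\sum_{i=0}^\infty \frac{\mu^i e^{-\mu}}{i!}Y_i,\quad Q_\nu=\sum_{i=0}^\infty \frac{\nu^i e^{-\nu}}{i!}Y_i,\quad E_\mu Q_\mu=\sum_{i=0}^\infty \frac{\mu^i e^{-\mu}}{i!}Y_ie_i,\quad E_\nu Q_\nu=\sum_{i=0}^\infty \frac{\nu^i e^{-\nu}}{i!}Y_ie_i$$ (the first two are the ''gain equations'', the last two the ''error equations''). *)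

From Stdlib Require Import Reals Lra.
From Coquelicot Require Import Coquelicot.
Open Scope R_scope.

(* binary entropy h(x) = -x log2 x - (1-x) log2 (1-x); at x = 0 or 1 the
   factor 0 kills whatever value ln 0 has, so 0 log2 0 = 0 automatically. *)
Definition h (x : R) : R :=
  - x * (ln x / ln 2) - (1 - x) * (ln (1 - x) / ln 2).

Definition pois (m : R) (i : nat) : R := m ^ i * exp (- m) / INR (Stdlib.Arith.Factorial.fact i).

Definition DS (mu nu Qmu Qnu Emu Enu : R) (Y e : nat -> R) : Prop :=
  is_series (fun i => pois mu i * Y i) Qmu /\
  is_series (fun i => pois nu i * Y i) Qnu /\
  is_series (fun i => pois mu i * Y i * e i) (Emu * Qmu) /\
  is_series (fun i => pois nu i * Y i * e i) (Enu * Qnu).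

Definition inS (mu nu Qmu Qnu Emu Enu Y0 : R) (Y e : nat -> R) : Prop :=
  Y 0%nat = Y0 /\ e 0%nat = 1 / 2 /\
  (forall i, (1 <= i)%nat -> 0 <= Y i <= 1 /\ 0 <= e i <= 1) /\
  DS mu nu Qmu Qnu Emu Enu Y e.

Definition Kconst (mu nu Qmu Qnu Emu Enu Y0 : R) : R :=
  / mu * exp mu * (Emu * Qmu) - / nu * exp nu * (Enu * Qnu)
  + (mu - nu) / (2 * mu * nu) * Y0.

Definition beta (mu nu : R) (i : nat) : R :=
  (mu ^ (i - 1) - nu ^ (i - 1)) / INR (Stdlib.Arith.Factorial.fact i).

Definition beta_tail (mu nu : R) (k : nat) : R :=
  Series (fun n => beta mu nu (n + k)).

(* The optimal configuration is certified by Lagrangian duality.  Since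
   [1 - h] is convex, [Y1 (1 - h e1) >= al Y1 - ga Y1 e1], with equality at
   the optimum, where [x |-> al - ga x] is the tangent of [1 - h] at [e1°].
   Subtracting the constraints (DS) of the optimum from those of any
   configuration and weighting the four resulting equations by suitable
   multipliers gives a series with sum 0, whose term of index 1 is
   [-(al Y1 - ga Y1 e1) + (al Y1° - ga Y1° e1°)] and whose terms of index
   [>= 2] are nonnegative.  Their signs are complementary slackness: the
   multipliers put weight [mu^a nu^b - mu^b nu^a] on each term, and this
   changes sign exactly where [Y°] jumps from 0 to 1 (at [k0 - 1]) and
   where [e°] jumps from 0 to 1 (at 3). *)
From Stdlib Require Import Reals Lra Lia.
From Coquelicot Require Import Coquelicot.
Open Scope R_scope.

Lemma series_head_le (a : nat -> R) (l : R) :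
  is_series a l -> (forall n, 0 <= a (S (S n))) -> a 0%nat + a 1%nat <= l.
Proof.
  intros Ha Htail.
  assert (Ha1 : is_series (fun n => a (S n)) (l - a 0%nat)).
  { apply is_series_incr_1.
    match goal with |- is_series _ ?s => replace s with l by (unfold plus; simpl; ring) end.
    exact Ha. }
  assert (Ha2 : is_series (fun n => a (S (S n))) (l - a 0%nat - a 1%nat)).
  { apply (is_series_incr_1 (fun n => a (S n))).
    match goal with
    |- is_series _ ?s => replace s with (l - a 0%nat) by (unfold plus; simpl; ring)
    end.
    exact Ha1. }
  assert (Hsum : 0 <= Series (fun n => a (S (S n)))).
  { replace 0 with (Series (fun n => 0 * a n)) by (rewrite Series_scal_l; ring).
    apply Series_le; [| eexists; exact Ha2].
    intro n. rewrite Rmult_0_l. split; [lra | apply Htail]. }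
  rewrite (is_series_unique _ _ Ha2) in Hsum. lra.
Qed.

Lemma pow_lt_pow_l (x y : R) (n : nat) : 0 <= x < y -> n <> 0%nat -> x ^ n < y ^ n.
Proof.
  intros Hxy Hn. destruct n as [|n]; [contradiction|].
  induction n as [|n IH]; [simpl; lra|].
  assert (0 <= x ^ S n) by (apply pow_le; lra).
  assert (x ^ S n < y ^ S n) by (apply IH; lia).
  change (x * x ^ S n < y * y ^ S n). nra.
Qed.

Lemma xlnx_ge_tangent (c x : R) :
  0 < c -> 0 <= x -> c * ln c + (1 + ln c) * (x - c) <= x * ln x.
Proof.
  intros Hc Hx. destruct (Req_dec x 0) as [->|Hx0].
  - replace (c * ln c + (1 + ln c) * (0 - c)) with (- c) by ring.
    rewrite Rmult_0_l. lra.
  - (* [ln (c/x) <= c/x - 1], multiplied by [x] *)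
    assert (E := exp_ineq1_le (ln (c / x))).
    rewrite exp_ln in E by (apply Rdiv_lt_0_compat; lra).
    unfold Rdiv in E. rewrite ln_mult, ln_Rinv in E by (try apply Rinv_0_lt_compat; lra).
    assert (x * (1 + (ln c + - ln x)) <= x * (c * / x)) by (apply Rmult_le_compat_l; lra).
    replace (x * (c * / x)) with c in H by (field; lra).
    nra.
Qed.

Definition h_slope (c : R) : R := (ln (1 - c) - ln c) / ln 2.

Definition h_intercept (c : R) : R := 1 + ln (1 - c) / ln 2.

Lemma ln2_pos : 0 < ln 2.
Proof. rewrite <- ln_1. apply ln_increasing; lra. Qed.

Lemma one_sub_h_tangent (c : R) :
  0 < c < 1 -> 1 - h c = h_intercept c - h_slope c * c.
Proof.
  intros Hc. assert (Hl2 := ln2_pos).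
  unfold h, h_intercept, h_slope. field. lra.
Qed.

Lemma one_sub_h_ge_tangent (c x : R) :
  0 < c < 1 -> 0 <= x <= 1 -> h_intercept c - h_slope c * x <= 1 - h x.
Proof.
  intros Hc Hx. assert (Hl2 := ln2_pos).
  assert (T := xlnx_ge_tangent c x ltac:(lra) ltac:(lra)).
  assert (T' := xlnx_ge_tangent (1 - c) (1 - x) ltac:(lra) ltac:(lra)).
  enough (0 <= 1 - h x - (h_intercept c - h_slope c * x)) by lra.
  replace (1 - h x - (h_intercept c - h_slope c * x)) with
    ((x * ln x + (1 - x) * ln (1 - x)
      - (c * ln c + (1 + ln c) * (x - c))
      - ((1 - c) * ln (1 - c) + (1 + ln (1 - c)) * ((1 - x) - (1 - c)))) / ln 2)
    by (unfold h, h_intercept, h_slope; field; lra).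
  apply Rdiv_le_0_compat; lra.
Qed.

Lemma h_intercept_nonneg (c : R) : 0 < c <= 1 / 2 -> 0 <= h_intercept c.
Proof.
  intros Hc. assert (Hl2 := ln2_pos).
  assert (ln (/ 2) <= ln (1 - c)) by (apply ln_le; lra).
  rewrite ln_Rinv in H by lra.
  unfold h_intercept. replace (1 + ln (1 - c) / ln 2) with ((ln 2 + ln (1 - c)) / ln 2)
    by (field; lra).
  apply Rdiv_le_0_compat; lra.
Qed.

Lemma h_intercept_le_slope (c : R) : 0 < c <= 1 / 2 -> h_intercept c <= h_slope c.
Proof.
  intros Hc. assert (Hl2 := ln2_pos).
  assert (ln c <= ln (/ 2)) by (apply ln_le; lra).
  rewrite ln_Rinv in H by lra.
  enough (0 <= h_slope c - h_intercept c) by lra.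
  replace (h_slope c - h_intercept c) with ((- ln c - ln 2) / ln 2)
    by (unfold h_slope, h_intercept; field; lra).
  apply Rdiv_le_0_compat; lra.
Qed.

Section DualCertificate.

Variables mu nu Qmu Qnu Emu Enu : R.
Hypothesis nu_pos : 0 < nu.
Hypothesis nu_lt_mu : nu < mu.

Definition cross_pow (a b : nat) : R := mu ^ a * nu ^ b - mu ^ b * nu ^ a.

Lemma cross_pow_nonneg (a b : nat) : (b <= a)%nat -> 0 <= cross_pow a b.
Proof.
  intros Hba. unfold cross_pow.
  replace a with (a - b + b)%nat by lia. rewrite !pow_add.
  assert (nu ^ (a - b) <= mu ^ (a - b)) by (apply pow_incr; lra).
  assert (0 <= mu ^ b * nu ^ b) by (apply Rmult_le_pos; apply pow_le; lra).
  replace (mu ^ (a - b) * mu ^ b * nu ^ b - mu ^ b * (nu ^ (a - b) * nu ^ b))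
    with (mu ^ b * nu ^ b * (mu ^ (a - b) - nu ^ (a - b))) by ring.
  apply Rmult_le_pos; lra.
Qed.

Lemma cross_pow_nonpos (a b : nat) : (a <= b)%nat -> cross_pow a b <= 0.
Proof.
  intros Hab. assert (H := cross_pow_nonneg b a Hab). unfold cross_pow in *. lra.
Qed.

Lemma cross_pow_gt0 (a : nat) : a <> 0%nat -> 0 < cross_pow a 0.
Proof.
  intros Ha. assert (mu ^ a > nu ^ a) by (apply pow_lt_pow_l; [lra | exact Ha]).
  unfold cross_pow. simpl. lra.
Qed.

Definition poisson_mix (a b : R) (n : nat) : R := a * pois mu n + b * pois nu n.

Lemma is_series_lagrangian (a b c d : R) (Y e Y' e' : nat -> R) :
  DS mu nu Qmu Qnu Emu Enu Y e -> DS mu nu Qmu Qnu Emu Enu Y' e' ->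
  is_series (fun n => poisson_mix a b n * (Y n - Y' n)
                      + poisson_mix c d n * (Y n * e n - Y' n * e' n)) 0.
Proof.
  intros [G1 [G2 [E1 E2]]] [G1' [G2' [E1' E2']]].
  assert (Hdiff : forall m u v l l', is_series u l -> is_series v l' ->
    is_series (fun n => m * (u n - v n)) (m * (l - l'))).
  { intros m u v l l' Hu Hv. exact (is_series_scal m _ _ (is_series_minus _ _ _ _ Hu Hv)). }
  assert (H := is_series_plus _ _ _ _
    (is_series_plus _ _ _ _ (Hdiff a _ _ _ _ G1 G1') (Hdiff b _ _ _ _ G2 G2'))
    (is_series_plus _ _ _ _ (Hdiff c _ _ _ _ E1 E1') (Hdiff d _ _ _ _ E2 E2'))).
  match type of H with
  | is_series _ ?l => replace l with 0 in H by (unfold plus; simpl; ring)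
  end.
  revert H. apply is_series_ext. intro n. unfold poisson_mix, plus. simpl. ring.
Qed.

(* The weight of [Y_n e_n] in the certificate changes sign at [n = p + 1];
   for the optimum [p = k0 - 2]. *)
Variables (p : nat) (al ga : R).
Hypothesis p_pos : p <> 0%nat.
Hypothesis al_nonneg : 0 <= al.
Hypothesis al_le_ga : al <= ga.

(* Multipliers of the four equations of (DS), solved from the weights
   prescribed in [weight_Y_S] and [weight_Ye_S]. *)
Definition err_multiplier : R := al * mu / (mu - nu) + (ga - al) * mu ^ p / cross_pow p 0.

Definition weight_Y : nat -> R :=
  poisson_mix (al * nu * exp mu / (mu * (mu - nu))) (- (al * mu * exp nu / (nu * (mu - nu)))).

Definition weight_Ye : nat -> R :=
  poisson_mix ((ga - err_multiplier) * exp mu / mu) (err_multiplier * exp nu / nu).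

Lemma weight_Y_S (m : nat) :
  weight_Y (S m) = al * cross_pow m 1 / ((mu - nu) * INR (Factorial.fact (S m))).
Proof.
  assert (HF := INR_fact_lt_0 (S m)).
  assert (Hem := exp_pos mu). assert (Hen := exp_pos nu).
  unfold weight_Y, poisson_mix, pois, cross_pow. rewrite !exp_Ropp.
  set (F := INR (Factorial.fact (S m))) in *.
  simpl. field. repeat split; lra.
Qed.

Lemma weight_Ye_S (m : nat) :
  weight_Ye (S m) = - weight_Y (S m)
    + (ga - al) * cross_pow p m / (cross_pow p 0 * INR (Factorial.fact (S m))).
Proof.
  assert (HF := INR_fact_lt_0 (S m)).
  assert (HX := cross_pow_gt0 p p_pos).
  assert (Hem := exp_pos mu). assert (Hen := exp_pos nu).
  rewrite weight_Y_S. unfold weight_Ye, err_multiplier, poisson_mix, pois.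
  unfold cross_pow in *. rewrite !exp_Ropp.
  set (F := INR (Factorial.fact (S m))) in *.
  simpl. simpl in HX. field. repeat split; lra.
Qed.

Lemma weight_Y_1 : weight_Y 1 = - al.
Proof.
  rewrite weight_Y_S. change (INR (Factorial.fact 1)) with 1.
  unfold cross_pow. simpl. field. lra.
Qed.

Lemma weight_Ye_1 : weight_Ye 1 = ga.
Proof.
  assert (HX := cross_pow_gt0 p p_pos).
  rewrite weight_Ye_S, weight_Y_1. change (INR (Factorial.fact 1)) with 1.
  field. lra.
Qed.

Section Slackness.

Variables Yc ec Y e : nat -> R.
Hypothesis ec_high : forall n, (3 <= n)%nat -> ec n = 1.
Hypothesis Yc_ec_low : forall n, (2 <= n <= p)%nat -> Yc n * ec n = 0.
Hypothesis Yc_high : forall n, (p + 2 <= n)%nat -> Yc n = 1.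
Hypothesis Ye_bounds : forall n, (1 <= n)%nat -> 0 <= Y n <= 1 /\ 0 <= e n <= 1.

Lemma gap_term_nonneg (m : nat) :
  0 <= cross_pow (S m) 1 * ((Y (S (S m)) - Yc (S (S m)))
                        - (Y (S (S m)) * e (S (S m)) - Yc (S (S m)) * ec (S (S m)))).
Proof.
  destruct m as [|m].
  - replace (cross_pow 1 1) with 0 by (unfold cross_pow; ring). lra.
  - rewrite ec_high by lia.
    destruct (Ye_bounds (S (S (S m)))) as [HY He]; [lia|].
    apply Rmult_le_pos; [apply cross_pow_nonneg; lia | nra].
Qed.

Lemma slack_term_nonneg (m : nat) :
  0 <= cross_pow p (S m) * (Y (S (S m)) * e (S (S m)) - Yc (S (S m)) * ec (S (S m))).
Proof.
  destruct (Ye_bounds (S (S m))) as [HY He]; [lia|].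
  destruct (Compare_dec.lt_eq_lt_dec (S m) p) as [[Hlt|<-]|Hgt].
  - rewrite Yc_ec_low by lia.
    apply Rmult_le_pos; [apply cross_pow_nonneg; lia | nra].
  - replace (cross_pow (S m) (S m)) with 0 by (unfold cross_pow; ring). lra.
  - assert (cross_pow p (S m) <= 0) by (apply cross_pow_nonpos; lia).
    assert (Y (S (S m)) * e (S (S m)) <= 1) by nra.
    rewrite Yc_high, ec_high by lia. nra.
Qed.

Lemma lagrangian_term_nonneg (m : nat) :
  0 <= weight_Y (S (S m)) * (Y (S (S m)) - Yc (S (S m)))
       + weight_Ye (S (S m)) * (Y (S (S m)) * e (S (S m)) - Yc (S (S m)) * ec (S (S m))).
Proof.
  assert (HF := INR_fact_lt_0 (S (S m))).
  assert (HX := cross_pow_gt0 p p_pos).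
  rewrite weight_Ye_S, weight_Y_S.
  set (F := INR (Factorial.fact (S (S m)))) in *.
  set (dY := Y (S (S m)) - Yc (S (S m))).
  set (dYe := Y (S (S m)) * e (S (S m)) - Yc (S (S m)) * ec (S (S m))).
  replace (al * cross_pow (S m) 1 / ((mu - nu) * F) * dY
           + (- (al * cross_pow (S m) 1 / ((mu - nu) * F))
              + (ga - al) * cross_pow p (S m) / (cross_pow p 0 * F)) * dYe)
    with (al / ((mu - nu) * F) * (cross_pow (S m) 1 * (dY - dYe))
          + (ga - al) / (cross_pow p 0 * F) * (cross_pow p (S m) * dYe))
    by (field; lra).
  assert (0 < (mu - nu) * F) by (apply Rmult_lt_0_compat; lra).
  assert (0 < cross_pow p 0 * F) by (apply Rmult_lt_0_compat; lra).
  apply Rplus_le_le_0_compat; apply Rmult_le_pos.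
  - apply Rdiv_le_0_compat; lra.
  - apply gap_term_nonneg.
  - apply Rdiv_le_0_compat; lra.
  - apply slack_term_nonneg.
Qed.

Lemma lagrangian_dual_bound :
  Y 0%nat = Yc 0%nat -> e 0%nat = ec 0%nat ->
  DS mu nu Qmu Qnu Emu Enu Y e -> DS mu nu Qmu Qnu Emu Enu Yc ec ->
  ga * (Y 1%nat * e 1%nat - Yc 1%nat * ec 1%nat) <= al * (Y 1%nat - Yc 1%nat).
Proof.
  intros HY0 He0 HDS HDSc.
  assert (Ht : is_series (fun n => weight_Y n * (Y n - Yc n)
                                   + weight_Ye n * (Y n * e n - Yc n * ec n)) 0)
    by exact (is_series_lagrangian _ _ _ _ Y e Yc ec HDS HDSc).
  apply series_head_le in Ht; [| exact lagrangian_term_nonneg].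
  rewrite HY0, He0, weight_Y_1, weight_Ye_1 in Ht. lra.
Qed.

End Slackness.

End DualCertificate.

Theorem theorem1 (mu nu Qmu Qnu Emu Enu Y0 : R) (k0 : nat) (Yc ec : nat -> R) :
  0 < nu -> nu < mu ->
  0 <= Y0 <= 1 ->
  0 <= Kconst mu nu Qmu Qnu Emu Enu Y0 ->
  Kconst mu nu Qmu Qnu Emu Enu Y0 < beta_tail mu nu 3 ->
  (3 <= k0)%nat ->
  beta_tail mu nu k0 <= Kconst mu nu Qmu Qnu Emu Enu Y0 ->
  (forall k, (3 <= k)%nat -> (k < k0)%nat ->
     Kconst mu nu Qmu Qnu Emu Enu Y0 < beta_tail mu nu k) ->
  (4 <= k0)%nat ->
  (forall i, (3 <= i)%nat -> ec i = 1) ->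
  (forall i, (3 <= i)%nat -> (i <= k0 - 2)%nat -> Yc i = 0) ->
  Yc (k0 - 1)%nat =
    INR (Stdlib.Arith.Factorial.fact (k0 - 1)) / (mu ^ (k0 - 2) - nu ^ (k0 - 2))
    * (Kconst mu nu Qmu Qnu Emu Enu Y0 - beta_tail mu nu k0) ->
  (forall i, (k0 <= i)%nat -> Yc i = 1) ->
  ec 2%nat = 0 ->
  inS mu nu Qmu Qnu Emu Enu Y0 Yc ec ->
  0 < Yc 1%nat ->
  0 < ec 1%nat <= 1 / 2 ->
  forall Y e : nat -> R,
    inS mu nu Qmu Qnu Emu Enu Y0 Y e ->
    Y 1%nat * (1 - h (e 1%nat)) >= Yc 1%nat * (1 - h (ec 1%nat)).
Proof.
  (* Only feasibility and the 0/1 shape of the configuration matter: neither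
     the value of [Yc (k0 - 1)] nor the minimality of [k0] is used. *)
  intros Hnu Hmu _ _ _ _ _ _ Hk0 Hec_high HYc_mid _ HYc_high Hec2 HSc _ Hc Y e HS.
  destruct HSc as [HYc0 [Hec0 [_ HDSc]]].
  destruct HS as [HY0 [He0 [Hbd HDS]]].
  set (c := ec 1%nat) in *.
  assert (Hc1 : 0 < c < 1) by lra.
  assert (Hdual : h_slope c * (Y 1%nat * e 1%nat - Yc 1%nat * c)
                  <= h_intercept c * (Y 1%nat - Yc 1%nat)).
  { apply (lagrangian_dual_bound mu nu Qmu Qnu Emu Enu Hnu Hmu (k0 - 2)
           (h_intercept c) (h_slope c)); try assumption.
    - lia.
    - apply h_intercept_nonneg; lra.
    - apply h_intercept_le_slope; lra.
    - intros n Hn. destruct (Nat.eq_dec n 2) as [->|Hn2].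
      + rewrite Hec2. ring.
      + rewrite HYc_mid by lia. ring.
    - intros n Hn. apply HYc_high. lia.
    - congruence.
    - congruence. }
  destruct (Hbd 1%nat) as [HY1 He1]; [lia|].
  assert (Htan := one_sub_h_ge_tangent c (e 1%nat) Hc1 He1).
  rewrite (one_sub_h_tangent c Hc1).
  assert (Y 1%nat * (h_intercept c - h_slope c * e 1%nat) <= Y 1%nat * (1 - h (e 1%nat)))
    by (apply Rmult_le_compat_l; lra).
  nra.
Qed.
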